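(* Let $(M,g)$ be a complete Riemannian manifold and let $V\in L^\infty_{\rm loc}(M)$ with $V\ge1$ a.e., $\operatorname{ess\,lim}_{d(p,p_0)\to\infty}V(p)=\infty$, satisfying the doubling condition. Then for every $\epsilon>0$ there exists $A=A(\epsilon)>0$ such that for all $t\in(0,2]$, $$\int_{\{x\in M:V(x)\ge A/t\}}e^{-tV(x)}\,dx\le\epsilon\int_M e^{-tV(x)}\,dx.$$
   Context: $d$ is the Riemannian distance, $p_0\in M$ fixed, $dx$ and $|\cdot|$ the Riemannian measure. $\operatorname{ess\,lim}V=\infty$ means: for every $L>0$ there is $R>0$ with $V(p)\ge L$ for a.e. $p$ with $d(p,p_0)\ge R$. Doubling condition: with $\sigma(\lambda)=|\{x:V(x)\le\lambda\}|$, there are $C_V,\lambda_0>0$ with $\sigma(2\lambda)\le C_V\sigma(\lambda)$ for all $\lambda\ge\lambda_0$. *)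

From HB Require Import structures.
From mathcomp Require Import all_boot all_order all_algebra.
From mathcomp Require Import all_classical all_reals all_analysis.
Set Implicit Arguments. Unset Strict Implicit. Unset Printing Implicit Defensive.
Import Order.TTheory GRing.Theory Num.Theory.
Local Open Scope classical_set_scope.
Local Open Scope ring_scope.

(* The underlying "manifold" is modelled as a measure space (M, mu) equipped
   with a distance d. *)

Section Defs.
Context (disp : measure_display) (M : measurableType disp) (R : realType).
Variable mu : {measure set M -> \bar R}.

Definition sublevel_measure (V : M -> R) (lambda : R) : \bar R :=
  mu [set x | V x <= lambda].

Definition doubling_potential (V : M -> R) : Prop :=
  exists CV lambda0 : R, 0 < CV /\ 0 < lambda0 /\
    forall lambda, lambda0 <= lambda ->
      (sublevel_measure V (2 * lambda) <= CV%:E * sublevel_measure V lambda)%E.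

Definition ess_lim_infty (d : M -> M -> R) (p0 : M) (V : M -> R) : Prop :=
  forall L : R, 0 < L -> exists Rad : R, 0 < Rad /\
    {ae mu, forall p, Rad <= d p p0 -> L <= V p}.

Definition Linf_loc (d : M -> M -> R) (p0 : M) (V : M -> R) : Prop :=
  measurable_fun setT V /\
  forall Rad : R, exists K : R, {ae mu, forall p, d p p0 <= Rad -> `|V p| <= K}.
End Defs.

From HB Require Import structures.
From mathcomp Require Import all_boot all_order all_algebra.
From mathcomp Require Import all_classical all_reals all_analysis.
From mathcomp Require Import ring lra measurable_realfun.
Import Order.TTheory GRing.Theory Num.Theory.
Local Open Scope classical_set_scope.
Local Open Scope ring_scope.

(* Put s = l / t for a constant l large in terms of the doubling constant C and of eps.
   On {V <= s} the integrand is at least e^-l, so the whole integral is at least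
   e^-l sigma(s).  The set {V >= 2 s} is covered by the dyadic shells
   2^(n+1) s <= V <= 2^(n+2) s, where the integrand is at most e^(-2^(n+1) l) while,
   by doubling, sigma(2^(n+2) s) <= C^(n+2) sigma(s); for l large the n-th shell
   contributes at most eps e^-l sigma(s) / 2^(n+1). *)

Lemma natr_le_exp2 (R : numDomainType) (k : nat) : k.+1%:R <= 2 ^+ k :> R.
Proof. by rewrite -natrX ler_nat; exact: ltn_expl. Qed.

Lemma dyadic_shell {R : archiRealFieldType} {s x : R} : 0 < s -> 2 * s <= x ->
  exists n : nat, 2 ^+ n.+1 * s <= x <= 2 ^+ n.+2 * s.
Proof.
move=> s_gt0 x_ge.
suff shell_below k : x <= 2 ^+ k.+1 * s ->
    exists n : nat, 2 ^+ n.+1 * s <= x <= 2 ^+ n.+2 * s.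
  set k := Num.bound (x / s); apply: (shell_below k).
  have xs_ge0 : 0 <= x / s by rewrite divr_ge0 //; nra.
  have xs_lt : x / s < k%:R := archi_boundP xs_ge0.
  have k_le : k.+2%:R <= 2 ^+ k.+1 :> R := natr_le_exp2 R k.+1.
  rewrite -addn2 natrD in k_le; rewrite -ler_pdivrMr //; lra.
elim: k => [|k IHk] x_le.
  by exists 0%N; rewrite expr1 x_ge /=; move: x_le; rewrite expr1 exprS expr1; nra.
have [x_le'|x_gt] := leP x (2 ^+ k.+1 * s); first exact: IHk.
by exists k; rewrite (ltW x_gt).
Qed.

Lemma expRN_mul_le1 (R : realType) (l : R) : expR (- l) * l <= 1.
Proof.
rewrite expRN mulrC ler_pdivrMr ?expR_gt0 // mul1r.
by have := expR_ge1Dx l; lra.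
Qed.

Lemma expR_dyadic_doubling_le (R : realType) (C eps l : R) (n : nat) :
  1 <= C -> 0 < eps -> 2 * C <= l -> 2 * C ^+ 2 / eps <= l ->
  expR (- (2 ^+ n.+1 * l)) * C ^+ n.+2 <= eps * expR (- l) / (2 ^ n.+1)%:R.
Proof.
move=> C_ge1 eps_gt0 l_geC l_geC2.
have l_gt0 : 0 < l by lra.
set u := expR (- l).
have u_gt0 : 0 < u := expR_gt0 _.
have ul_le1 : u * l <= 1 := expRN_mul_le1 _ l.
have exp_le : expR (- (2 ^+ n.+1 * l)) <= u ^+ n.+2.
  rewrite /u -expRM_natl ler_expR.
  by have := natr_le_exp2 R n.+1; nra.
have Cu_le : 2 * (C * u) <= 1 by nra.
have Cu2_le : 2 * (C * u) ^+ 2 <= eps * u.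
  rewrite ler_pdivrMr // in l_geC2.
  have -> : 2 * (C * u) ^+ 2 = 2 * C ^+ 2 * u ^+ 2 by ring.
  apply: le_trans (ler_wpM2r (exprn_ge0 2 (ltW u_gt0)) l_geC2) _.
  have -> : l * eps * u ^+ 2 = eps * u * (u * l) by ring.
  by rewrite ler_piMr // mulr_ge0 // ltW.
(* (2 C u)^n <= 1 absorbs C^n, and 2 (C u)^2 <= eps u supplies the remaining factor. *)
rewrite natrX ler_pdivlMr ?exprn_gt0 //.
apply: le_trans (_ : (2 * (C * u)) ^+ n * (2 * (C * u) ^+ 2) <= _); last first.
  rewrite -[X in _ <= X]mul1r; apply: ler_pM => //.
  - by apply: exprn_ge0; nra.
  - nra.
  - by apply: exprn_ile1 => //; nra.
have -> : (2 * (C * u)) ^+ n * (2 * (C * u) ^+ 2) = u ^+ n.+2 * C ^+ n.+2 * 2 ^+ n.+1.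
  by rewrite !exprMn !exprS; ring.
apply: ler_wpM2r; first exact: exprn_ge0.
by apply: ler_wpM2r => //; apply: exprn_ge0; lra.
Qed.

Lemma nneseries_halves_mule {R : realType} {a : R} {m : \bar R} :
  0 <= a -> (0 <= m)%E ->
  (\sum_(n <oo) ((a / (2 ^ n.+1)%:R)%:E * m) <= a%:E * m)%E.
Proof.
move=> a_ge0; case: m => [r r_ge0| _|//].
- rewrite (eq_eseriesr (fun n _ => muleC _ r%:E)) nneseriesZl; last first.
    by move=> n _; rewrite lee_fin divr_ge0.
  by rewrite [X in (_ <= X)%E]muleC; apply: lee_wpmul2l => //; exact: epsilon_trick0.
- have [->|a_gt0] := eqVneq a 0.
    by rewrite mul0e eseries0 // => n _ _; rewrite mul0r mul0e.
  by rewrite gt0_muley ?leey // lte_fin lt_def a_gt0.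
Qed.

Section potential_integrals.
Context {disp : measure_display} {M : measurableType disp} {R : realType}.
Context {mu : {measure set M -> \bar R}} {V : M -> R}.

Local Notation sigma := (sublevel_measure mu V).

Lemma doubling_potential_ge1 : doubling_potential mu V ->
  exists C lambda0 : R, [/\ 1 <= C, 0 < lambda0 &
    forall lambda, lambda0 <= lambda -> (sigma (2 * lambda) <= C%:E * sigma lambda)%E].
Proof.
case=> C [lambda0 [C_gt0 [lambda0_gt0 doubling]]].
exists (Num.max C 1), lambda0; split; rewrite ?le_max ?lexx ?orbT // => lambda le_lambda.
apply: le_trans (doubling _ le_lambda) _.
by apply: lee_wpmul2r; rewrite ?measure_ge0 // lee_fin le_max lexx.
Qed.

Lemma sublevel_measure_iter_doubling {C lambda0 s : R} (n : nat) :
  0 <= C -> 0 < lambda0 -> lambda0 <= s ->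
  (forall lambda, lambda0 <= lambda -> (sigma (2 * lambda) <= C%:E * sigma lambda)%E) ->
  (sigma (2 ^+ n * s) <= (C ^+ n)%:E * sigma s)%E.
Proof.
move=> C_ge0 lambda0_gt0 s_ge doubling.
have s_ge0 : 0 <= s by lra.
elim: n => [|n IHn]; first by rewrite !expr0 mul1r mul1e.
have s_le : lambda0 <= 2 ^+ n * s.
  by apply: le_trans s_ge _; rewrite ler_peMl // exprn_ege1 // ler1n.
rewrite exprS -mulrA; apply: le_trans (doubling _ s_le) _.
by rewrite exprS EFinM -muleA; apply: lee_wpmul2l; rewrite ?lee_fin.
Qed.

Hypothesis mV : measurable_fun setT V.

Lemma measurable_sublevel (a : R) : measurable [set x | V x <= a].
Proof.
have -> : [set x | V x <= a] = V @^-1` `]-oo, a].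
  by apply/seteqP; split => x /=; rewrite in_itv.
by rewrite -[_ @^-1` _]setTI; exact: mV.
Qed.

Lemma measurable_superlevel (a : R) : measurable [set x | a <= V x].
Proof.
have -> : [set x | a <= V x] = V @^-1` `[a, +oo[.
  by apply/seteqP; split => x /=; rewrite in_itv /= andbT.
by rewrite -[_ @^-1` _]setTI; exact: mV.
Qed.

Lemma measurable_expR_potential (t : R) :
  measurable_fun setT (fun x => (expR (- (t * V x)))%:E : \bar R).
Proof.
apply/measurable_EFinP; apply: measurableT_comp => //.
by apply: measurable_funN; apply: measurable_funM.
Qed.

Lemma sublevel_measure_le_integral_expR {t : R} (s : R) : 0 <= t ->
  ((expR (- (t * s)))%:E * sigma s <= \int[mu]_x (expR (- (t * V x)))%:E)%E.
Proof.
move=> t_ge0; rewrite -(integral_cst mu (measurable_sublevel s)).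
have expR_ge0E x : (0 <= (expR (- (t * V x)))%:E)%E by rewrite lee_fin expR_ge0.
apply: (@le_trans _ _ (\int[mu]_(x in [set x | (V x <= s)%R]) (expR (- (t * V x)))%:E)%E).
  apply: ge0_le_integral => //; first exact: measurable_sublevel.
  - by move=> x _; rewrite lee_fin expR_ge0.
  - exact: measurable_funS (measurable_expR_potential t).
  - by move=> x /= Vx_le; rewrite lee_fin ler_expR lerN2 ler_wpM2l.
apply: ge0_subset_integral => //; first exact: measurable_sublevel.
exact: measurable_expR_potential.
Qed.

Lemma superlevel_integral_expR_le_dyadic {t s : R} : 0 <= t -> 0 < s ->
  (\int[mu]_(x in [set x | (2 * s <= V x)%R]) (expR (- (t * V x)))%:E <=
   \sum_(n <oo) ((expR (- (t * (2 ^+ n.+1 * s))))%:E * sigma (2 ^+ n.+2 * s)%R))%E.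
Proof.
move=> t_ge0 s_gt0.
set D := [set x | 2 * s <= V x]; have mD : measurable D := measurable_superlevel _.
pose shell n := [set x | V x <= 2 ^+ n.+2 * s].
pose height n := expR (- (t * (2 ^+ n.+1 * s))).
pose g n x := (height n * \1_(shell n) x)%:E.
have g_ge0 n x : (0 <= g n x)%E by rewrite lee_fin mulr_ge0 ?expR_ge0.
have mg n : measurable_fun setT (g n).
  apply/measurable_EFinP; apply: measurable_funM => //.
  exact/measurable_indic/measurable_sublevel.
have int_g n : (\int[mu]_(x in D) g n x <= (height n)%:E * sigma (2 ^+ n.+2 * s))%E.
  apply: le_trans (ge0_subset_integral _ _ _ _ _ (@subsetT _ D)) _ => //.
  rewrite (integralZl_indic _ (fun=> shell n)) ?integral_indic ?setIT //.
  - exact: measurable_sublevel.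
  - by move=> h_lt0; have := expR_gt0 (- (t * (2 ^+ n.+1 * s))); rewrite ltNge ltW.
  - exact: measurable_sublevel.
apply: (@le_trans _ _ (\int[mu]_(x in D) \sum_(n <oo) g n x)%E).
  apply: ge0_le_integral => //.
  - exact: measurable_funS (measurable_expR_potential t).
  - apply: (emeasurable_fun_cvg (fun m x => \sum_(0 <= n < m) g n x)%E).
      by move=> m; apply: emeasurable_sum => n; exact: measurable_funS (mg n).
    by move=> x _; apply: is_cvg_nneseries => n _ _.
  - move=> x Dx; have [n /andP[Vx_ge Vx_le]] := @dyadic_shell _ s (V x) s_gt0 Dx.
    apply: le_trans (nneseries_lim_ge n.+1 _) => [|i _ _]; last exact: g_ge0.
    rewrite big_nat_recr //= lee_paddl ?sume_ge0 // /g indicE mem_set // mulr1.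
    by rewrite lee_fin ler_expR lerN2 ler_wpM2l.
rewrite integral_nneseries //; last by move=> n; exact: measurable_funS (mg n).
by apply: lee_nneseries => [n _ _|n _]; [apply: integral_ge0 => x _ | exact: int_g].
Qed.

Lemma superlevel_integral_expR_le {C lambda0 eps t s : R} :
  1 <= C -> 0 < lambda0 ->
  (forall lambda, lambda0 <= lambda -> (sigma (2 * lambda) <= C%:E * sigma lambda)%E) ->
  0 < eps -> 0 <= t -> lambda0 <= s -> 2 * C <= t * s -> 2 * C ^+ 2 / eps <= t * s ->
  (\int[mu]_(x in [set x | (2 * s <= V x)%R]) (expR (- (t * V x)))%:E <=
   eps%:E * ((expR (- (t * s)))%:E * sigma s))%E.
Proof.
move=> C_ge1 lambda0_gt0 doubling eps_gt0 t_ge0 s_ge ts_geC ts_geC2.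
have s_gt0 : 0 < s by lra.
apply: le_trans (superlevel_integral_expR_le_dyadic t_ge0 s_gt0) _.
rewrite muleA -EFinM; apply: le_trans _ (nneseries_halves_mule _ (measure_ge0 _ _)); last first.
  by rewrite mulr_ge0 ?expR_ge0 // ltW.
apply: lee_nneseries => [n _ _|n _]; first by rewrite mule_ge0 ?lee_fin ?expR_ge0.
have iter_le := sublevel_measure_iter_doubling n.+2 (le_trans ler01 C_ge1)
  lambda0_gt0 s_ge doubling.
apply: le_trans (lee_wpmul2l _ iter_le) _; first by rewrite lee_fin expR_ge0.
rewrite muleA -EFinM; apply: lee_wpmul2r; first exact: measure_ge0.
by rewrite lee_fin [t * _]mulrCA expR_dyadic_doubling_le.
Qed.

Lemma doubling_superlevel_integral_expR_le (tmax eps : R) :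
  doubling_potential mu V -> 0 < tmax -> 0 < eps ->
  exists A : R, 0 < A /\ forall t, 0 < t -> t <= tmax ->
    (\int[mu]_(x in [set x | (A / t <= V x)%R]) (expR (- (t * V x)))%:E
      <= eps%:E * \int[mu]_x (expR (- (t * V x)))%:E)%E.
Proof.
move=> doubling_V tmax_gt0 eps_gt0.
have [C [lambda0 [C_ge1 lambda0_gt0 doubling]]] := doubling_potential_ge1 doubling_V.
pose l := tmax * lambda0 + 2 * C + 2 * C ^+ 2 / eps.
have C2_ge0 : 0 <= 2 * C ^+ 2 / eps by rewrite divr_ge0 ?ltW //; nra.
exists (2 * l); split => [|t t_gt0 t_le]; first by rewrite /l; nra.
have ts : t * (l / t) = l by rewrite mulrC divfK ?gt_eqF.
have s_ge : lambda0 <= l / t by rewrite ler_pdivlMr // /l; nra.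
have ts_geC : 2 * C <= t * (l / t) by rewrite ts /l; nra.
have ts_geC2 : 2 * C ^+ 2 / eps <= t * (l / t) by rewrite ts /l; nra.
rewrite -mulrA; apply: le_trans (superlevel_integral_expR_le C_ge1 lambda0_gt0 doubling
  eps_gt0 (ltW t_gt0) s_ge ts_geC ts_geC2) _.
apply: lee_wpmul2l; first by rewrite lee_fin ltW.
exact: sublevel_measure_le_integral_expR (ltW t_gt0).
Qed.

End potential_integrals.

Theorem proposition3p5 (disp : measure_display) (M : measurableType disp)
  (R : realType) (mu : {measure set M -> \bar R})
  (d : M -> M -> R) (p0 : M) (V : M -> R)
  (* metric axioms for d *)
  (d_refl : forall x, d x x = 0)
  (d_sym : forall x y, d x y = d y x)
  (d_tri : forall x y z, d x z <= d x y + d y z)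
  (d_sep : forall x y, d x y = 0 -> x = y)
  (* distance to p0 is measurable, and bounded sets have finite measure
     (Hopf-Rinow for a complete Riemannian manifold) *)
  (d_meas : measurable_fun setT (fun x => d x p0))
  (balls_finite : forall Rad : R, (mu [set x | (d x p0 <= Rad)%R] < +oo)%E)
  (* hypotheses on V *)
  (hVloc : Linf_loc mu d p0 V)
  (hV1 : {ae mu, forall x, 1 <= V x})
  (hVlim : ess_lim_infty mu d p0 V)
  (hVdoub : doubling_potential mu V) :
  forall eps : R, 0 < eps -> exists A : R, 0 < A /\
    forall t : R, 0 < t -> t <= 2 ->
      (\int[mu]_(x in [set x | (A / t <= V x)%R]) (expR (- (t * V x)))%:E
        <= eps%:E * \int[mu]_(x in [set: M]) (expR (- (t * V x)))%:E)%E.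
Proof.
move=> eps eps_gt0; case: hVloc => mV _.
by apply: doubling_superlevel_integral_expR_le mV 2 eps hVdoub _ eps_gt0.
Qed.
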